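(* Let $n\ge2$, $\mu>0$, $p=[n/2]$, and let $\varphi:\Delta^{p}\to\Omega_2[n]$ send $u=(u_1,\dots,u_p)$ to the skew-symmetric $n\times n$ matrix whose $(j,n+1-j)$ entry is $u_j$ and whose $(n+1-j,j)$ entry is $-u_j$ for $j=1,\dots,p$, all other entries being $0$. Then $f:M_{\Delta^{p}}(\mu)\to M_{\Omega_2[n]}(\mu)$, $f(u,w)=(\varphi(u),w)$, is a totally geodesic Kähler immersion.
   Context: $\Omega_2[n]=\{Z\in M_n(\mathbb C): Z=-Z^T,\ I_n-ZZ^*>0\}$, viewed as a domain in $\mathbb C^{n(n-1)/2}$ via the coordinates $u_{jk}$, $j<k$ (the entries above the diagonal), with generic norm $N(Z,Z)=\det^{1/2}(I_n-ZZ^* )$. $\Delta^p$ is the unit polydisk with $N_{\Delta^p}(u,u)=\prod_j(1-|u_j|^2)$. For a domain $\Omega$ with generic norm $N_\Omega$ and $\mu>0$: $M_\Omega(\mu)=\{(z,w)\in\Omega\times\mathbb C:|w|^2<N_\Omega^\mu(z,z)\}$ with Kähler metric $\omega(\mu)=\frac i2\partial\bar\partial(-\log(N_\Omega^\mu(z,z)-|w|^2))$. A Kähler immersion is a holomorphic map pulling back the target metric to the source metric. *)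

From HB Require Import structures.
From mathcomp Require Import all_boot all_order all_algebra.
From mathcomp Require Import all_classical all_reals all_analysis.
From mathcomp.real_closed Require Import complex.
Set Implicit Arguments. Unset Strict Implicit. Unset Printing Implicit Defensive.
Import Order.TTheory GRing.Theory Num.Theory.
Import numFieldNormedType.Exports.
Local Open Scope ring_scope.

Section Kahler.
Variable R : realType.
Local Notation C := (complex R).

(* A point of C^N, as (real parts, imaginary parts). *)
Definition pt (N : nat) := ('rV[R]_N * 'rV[R]_N)%type.

Definition coord N (z : pt N) (k : 'I_N) : C := Complex (z.1 0 k) (z.2 0 k).

Definition sqn (c : C) : R := complex.Re c ^+ 2 + complex.Im c ^+ 2.

Definition ex N (k : 'I_N) : pt N := (delta_mx 0 k, 0).
Definition ey N (k : 'I_N) : pt N := (0, delta_mx 0 k).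

Definition dx N (F : pt N -> R) (k : 'I_N) (z : pt N) : R := 'D_(ex k) F z.
Definition dy N (F : pt N -> R) (k : 'I_N) (z : pt N) : R := 'D_(ey k) F z.

Definition dxC N (G : pt N -> C) k z : C :=
  Complex (dx (fun w => complex.Re (G w)) k z) (dx (fun w => complex.Im (G w)) k z).
Definition dyC N (G : pt N -> C) k z : C :=
  Complex (dy (fun w => complex.Re (G w)) k z) (dy (fun w => complex.Im (G w)) k z).

Definition dz N (G : pt N -> C) (k : 'I_N) (z : pt N) : C :=
  (dxC G k z - Complex 0 1 * dyC G k z) / 2%:R.
Definition dzb N (G : pt N -> C) (k : 'I_N) (z : pt N) : C :=
  (dxC G k z + Complex 0 1 * dyC G k z) / 2%:R.

(* Kaehler metric of the form omega = (i/2) d dbar Phi: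
   g_{a bbar}(z) = d^2 Phi / dz_a dzbar_b (z) *)
Definition gmet N (Phi : pt N -> R) (a b : 'I_N) (z : pt N) : C :=
  dz (fun w => dzb (fun v => Complex (Phi v) 0) b w) a z.

Definition gmx N (Phi : pt N -> R) (z : pt N) : 'M[C]_N :=
  \matrix_(a, b) gmet Phi a b z.

(* Christoffel symbols of the Levi-Civita (= Chern) connection of a Kaehler
   metric:  Gamma^k_{ab} = sum_l g^{k lbar} d_a g_{b lbar} *)
Definition christoffel N (Phi : pt N -> R) (k a b : 'I_N) (z : pt N) : C :=
  \sum_(l < N) dz (fun w => gmet Phi b l w) a z * (invmx (gmx Phi z)) l k.

Definition fcomp m N (f : pt m -> pt N) (k : 'I_N) : pt m -> C :=
  fun w => coord (f w) k.

Definition holomorphic_on m N (D : set (pt m)) (f : pt m -> pt N) :=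
  forall z, D z -> differentiable f z /\
    forall (k : 'I_N) (b : 'I_m), dzb (fcomp f k) b z = 0.

(* Kaehler immersion: holomorphic map D1 -> D2 with f^* omega_2 = omega_1 *)
Definition kahler_immersion m N (D1 : set (pt m)) (Phi1 : pt m -> R)
    (D2 : set (pt N)) (Phi2 : pt N -> R) (f : pt m -> pt N) :=
  [/\ forall z, D1 z -> D2 (f z),
      holomorphic_on D1 f &
      forall z, D1 z -> forall a b : 'I_m,
        gmet Phi1 a b z =
        \sum_(i < N) \sum_(j < N)
           gmet Phi2 i j (f z) * dz (fcomp f i) a z * (dz (fcomp f j) b z)^* ].

(* Totally geodesic (for a holomorphic map into a Kaehler domain): the second
   fundamental form vanishes, i.e. the ambient covariant derivative
   nabla_{f_* d_a} f_* d_b = (d_a d_b f^k + Gamma^k_{ij}(f) d_a f^i d_b f^j) d_k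
   is tangent to the image (lies in the span of the d_c f). *)
Definition totally_geodesic m N (D1 : set (pt m)) (Phi2 : pt N -> R)
    (f : pt m -> pt N) :=
  forall z, D1 z -> forall a b : 'I_m, exists c : 'I_m -> C,
    forall k : 'I_N,
      dz (fun w => dz (fcomp f k) b w) a z
      + \sum_(i < N) \sum_(j < N)
          christoffel Phi2 k i j (f z) * dz (fcomp f i) a z * dz (fcomp f j) b z
      = \sum_(g < m) c g * dz (fcomp f k) g z.

Definition zpart N (z : pt (N + 1)) : pt N := (lsubmx z.1, lsubmx z.2).
Definition wpart N (z : pt (N + 1)) : C := coord z (rshift N ord0).

Definition Mdom N (Omega : set (pt N)) (NO : pt N -> R) (mu : R)
  : set (pt (N + 1)) :=
  [set z | Omega (zpart z) /\ sqn (wpart z) < NO (zpart z) `^ mu].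

Definition Mpot N (NO : pt N -> R) (mu : R) (z : pt (N + 1)) : R :=
  - ln (NO (zpart z) `^ mu - sqn (wpart z)).

Definition polydisk p : set (pt p) := [set u | forall j, sqn (coord u j) < 1].
Definition polydisk_norm p (u : pt p) : R := \prod_(j < p) (1 - sqn (coord u j)).

Definition skew_idx (n : nat) := {q : 'I_n * 'I_n | (q.1 < q.2)%N}.
Definition skew_dim (n : nat) := #|{: skew_idx n}|.

Definition ucoef n (z : pt (skew_dim n)) (j k : 'I_n) : C :=
  if (insub (j, k) : option (skew_idx n)) is Some q then coord z (enum_rank q)
  else 0.

Definition Zmat n (z : pt (skew_dim n)) : 'M[C]_n :=
  \matrix_(j, k) (ucoef z j k - ucoef z k j).

Definition adjmx n (A : 'M[C]_n) : 'M[C]_n := (map_mx Num.conj A)^T.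

Definition posdef n (A : 'M[C]_n) :=
  forall v : 'rV[C]_n, v != 0 -> 0 < (v *m A *m (map_mx Num.conj v)^T) 0 0.

Definition Omega2 n : set (pt (skew_dim n)) :=
  [set z | posdef (1%:M - Zmat z *m adjmx (Zmat z))].

Definition Omega2_norm n (z : pt (skew_dim n)) : R :=
  Num.sqrt (complex.Re (\det (1%:M - Zmat z *m adjmx (Zmat z)))).

(* phi(u): the coordinate u_{j, n-1-j} (0-based) equals u_j for j < n/2,
   all other coordinates vanish *)
Definition phiv n (x : 'rV[R]_(n./2)) : 'rV[R]_(skew_dim n) :=
  \row_i let q : skew_idx n := enum_val (i : 'I_#|{: skew_idx n}|) in
    \sum_(j < n./2)
     (if (nat_of_ord (val q).1 == nat_of_ord j) &&
         (nat_of_ord (val q).2 == (n.-1 - j)%N) then x 0 j else 0).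

Definition phi_ext n (z : pt (n./2 + 1)) : pt (skew_dim n + 1) :=
  (row_mx (phiv (lsubmx z.1)) (rsubmx z.1),
   row_mx (phiv (lsubmx z.2)) (rsubmx z.2)).

End Kahler.

From Pilot Require Import Defs.
From HB Require Import structures.
From mathcomp Require Import all_boot all_order all_algebra.
From mathcomp Require Import all_classical all_reals all_analysis.
From mathcomp.real_closed Require Import complex.
From mathcomp Require Import zify ring.
Import Order.TTheory GRing.Theory Num.Theory.
Import numFieldNormedType.Exports.
Local Open Scope classical_set_scope.
Local Open Scope complex_scope.
Local Open Scope ring_scope.
Set Implicit Arguments. Unset Strict Implicit. Unset Printing Implicit Defensive.

(* The map phi_ext is z |-> (z.1 *m A, z.2 *m A) for the 0/1 matrix A sending the
   coordinate u_j to u_{j, n-1-j} and w to w, so every Wirtinger derivative of a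
   composite F \o phi_ext is a derivative of F in a selected coordinate direction.
   For Z = phi(u) the matrix Z Z^* is diagonal with entries |u_j|^2, each occurring
   twice (plus a 0 when n is odd), hence N_Omega(phi(u)) = prod_j (1 - |u_j|^2) =
   N_Delta(u): the two potentials agree near every point and f pulls the metric back.
   For total geodesy take a coordinate u_{jk} off the image of phi, say j = j0.
   Conjugating Z by the diagonal sign matrix with -1 at j0 and n-1-j0 preserves N,
   fixes the image of f pointwise and changes the sign of u_{jk}. The Christoffel
   symbols are equivariant under this reflection, so Gamma^{jk}_{ab} = 0 whenever
   a and b are image directions, and the ambient covariant derivative along f stays
   tangent to the image. *)

Section DirectionalDerivative.
Variables (R : realType) (V : normedModType R).
Implicit Types (f : V -> R) (a v : V).

Lemma dnbhs0_oppr : (-%R @ (0 : R)^') = (0 : R)^'.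
Proof.
rewrite predeqE => A.
change ((\forall y \near (0 : R), y != 0 -> A (- y)) <->
        (\forall y \near (0 : R), y != 0 -> A y)).
have := @nearN R 0 (fun y => y != 0 -> A y); rewrite oppr0 => ->.
split; apply: filterS => x /= Ax; rewrite ?oppr_eq0 // => x0.
by apply: Ax; rewrite oppr_eq0.
Qed.

(* No derivability is needed: when [f] is not derivable both sides are the junk
   value [0] of [lim] (for a general codomain it would be an arbitrary [point]). *)
Lemma derive_mull f (k : R) a v : 'D_v (fun x => k * f x) a = k * 'D_v f a.
Proof.
have [->|k0] := eqVneq k 0.
  have -> : (fun x => 0 * f x) = cst 0 by apply/funext => x; rewrite mul0r.
  by rewrite derive_cst mul0r.
rewrite /derive.
set g := fun h : R => h^-1 *: ((f \o shift a) (h *: v) - f a).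
have -> : (fun h : R => h^-1 *: (((fun x => k * f x) \o shift a) (h *: v) - k * f a))
    = k *: g.
  by apply/funext => h; rewrite /g /= -mulrBr !scalerA mulrC -scalerA.
have [cg|ncg] := pselect (cvg (g @ (0 : R)^')); first exact: limZl_tmp.
have nckg : ~ cvg ((k *: g) @ (0 : R)^') by rewrite is_cvgZlE.
by rewrite (dvgP ncg) (dvgP nckg) /= mulr0.
Qed.

Lemma derive_oppv f a v : 'D_(- v) f a = - 'D_v f a.
Proof.
rewrite /derive.
set g := fun h : R => h^-1 *: ((f \o shift a) (h *: v) - f a).
have -> : (fun h : R => h^-1 *: ((f \o shift a) (h *: - v) - f a)) =
    (fun h => - g (- h)).
  by apply/funext => h; rewrite /g /= invrN scaleNr opprK scalerN scaleNr.
have -> : (fun h => - g (- h)) @ (0 : R)^' = -%R @ (g @ (-%R @ (0 : R)^')) by [].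
rewrite dnbhs0_oppr.
have [cg|ncg] := pselect (cvg (g @ (0 : R)^')); first exact: limN.
have ncNg : ~ cvg (- g @ (0 : R)^') by rewrite is_cvgNE.
by rewrite (dvgP ncg) (dvgP ncNg) oppr0.
Qed.

Lemma derive_signv f (b : bool) a v :
  'D_((-1) ^+ b *: v) f a = (-1) ^+ b * 'D_v f a.
Proof. by case: b; rewrite ?expr0 ?scale1r ?mul1r // expr1 scaleN1r mulN1r derive_oppv. Qed.

Lemma derive_comp_linear (U : normedModType R) (L : U -> V) f (a v : U) :
  linear L -> 'D_v (f \o L) a = 'D_(L v) f (L a).
Proof.
move=> Llin; rewrite /derive.
suff -> : (fun h : R => h^-1 *: ((f \o L \o shift a) (h *: v) - (f \o L) a)) =
  (fun h : R => h^-1 *: ((f \o shift (L a)) (h *: L v) - f (L a))) by [].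
by apply/funext => h /=; rewrite Llin.
Qed.

Lemma derive_linear f a v : linear f -> 'D_v f a = f v.
Proof.
move=> flin; rewrite /derive; apply: norm_lim_near_cst.
near=> h; have h0 : h != 0 by near: h; exact: nbhs_dnbhs_neq.
by rewrite /= flin addrK scalerA mulVf ?scale1r.
Unshelve. all: by end_near.
Qed.

End DirectionalDerivative.

Section Projections.
Variables (R : realType) (U W : normedModType R).

Lemma differentiable_fst (x : U * W) : differentiable fst x.
Proof.
have fst_lin : linear (@fst U W) by [].
pose f : {linear (U * W)%type -> U} :=
  HB.pack (@fst U W) (GRing.isLinear.Build _ _ _ _ _ fst_lin).
by apply: (linear_differentiable (f := f)) => y; exact: cvg_fst.
Qed.

Lemma differentiable_snd (x : U * W) : differentiable snd x.
Proof.
have snd_lin : linear (@snd U W) by [].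
pose f : {linear (U * W)%type -> W} :=
  HB.pack (@snd U W) (GRing.isLinear.Build _ _ _ _ _ snd_lin).
by apply: (linear_differentiable (f := f)) => y; exact: cvg_snd.
Qed.

End Projections.

Lemma self_opp_eq0 (T : numDomainType) (x : T) : x = - x -> x = 0.
Proof. by move/eqP; rewrite -subr_eq0 opprK -mulr2n mulrn_eq0 => /orP[|/eqP]. Qed.

Lemma sumr_mul_delta (T : pzSemiRingType) (I : finType) (F : I -> T) (i0 : I) :
  \sum_i F i * (i == i0)%:R = F i0.
Proof. by rewrite (bigD1 i0) //= eqxx mulr1 big1 ?addr0 // => i /negbTE ->; rewrite mulr0. Qed.

Section SignConjugation.
Variables (T : comUnitRingType) (m : nat) (s : 'I_m -> bool).

Definition sign_diag : 'M[T]_m := diag_mx (\row_i (-1) ^+ s i).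

Lemma sign_diagK : sign_diag *m sign_diag = 1%:M.
Proof.
rewrite mulmx_diag -diag_const_mx; congr diag_mx; apply/rowP => i.
by rewrite !mxE -signr_addb addbb.
Qed.

Lemma row_sign_diag i : row i sign_diag = (-1) ^+ s i *: 'e_i.
Proof. by rewrite row_diag_mx mxE. Qed.

Lemma sign_conjE (A : 'M[T]_m) i j :
  (sign_diag *m A *m sign_diag) i j = (-1) ^+ (s i (+) s j) * A i j.
Proof. by rewrite mul_mx_diag mxE mul_diag_mx !mxE signr_addb mulrAC. Qed.

Lemma mulmx_sign_diagE (x : 'rV[T]_m) i : (x *m sign_diag) 0 i = (-1) ^+ s i * x 0 i.
Proof. by rewrite mul_mx_diag !mxE mulrC. Qed.

Lemma det_sign_conj (A : 'M[T]_m) : \det (sign_diag *m A *m sign_diag) = \det A.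
Proof. by rewrite !det_mulmx mulrAC -det_mulmx sign_diagK det1 mul1r. Qed.

Lemma invmx_sign_conj (A : 'M[T]_m) :
  invmx (sign_diag *m A *m sign_diag) = sign_diag *m invmx A *m sign_diag.
Proof.
have Du : sign_diag \in unitmx by case/mulmx1_unit: sign_diagK.
have [Au|Anu] := boolP (A \in unitmx); last first.
  by rewrite !invmx_out ?inE ?unitmx_mul ?Du ?(negbTE Anu) ?andbF.
have DADu : sign_diag *m A *m sign_diag \in unitmx by rewrite !unitmx_mul Du Au.
have inv_right : (sign_diag *m A *m sign_diag) *m (sign_diag *m invmx A *m sign_diag)
    = 1%:M.
  rewrite !mulmxA -(mulmxA (sign_diag *m A) sign_diag) sign_diagK mulmx1.
  by rewrite -(mulmxA sign_diag A) mulmxV // mulmx1 sign_diagK.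
by rewrite -[LHS]mulmx1 -inv_right mulKmx.
Qed.

End SignConjugation.

Section ComplexFacts.
Variable R : realType.
Implicit Types (e : bool) (x : complex R).

Lemma Re_sign e x : complex.Re ((-1) ^+ e * x) = (-1) ^+ e * complex.Re x.
Proof. by case: e; rewrite ?expr0 ?mul1r // expr1 !mulN1r; case: x. Qed.

Lemma Im_sign e x : complex.Im ((-1) ^+ e * x) = (-1) ^+ e * complex.Im x.
Proof. by case: e; rewrite ?expr0 ?mul1r // expr1 !mulN1r; case: x. Qed.

Lemma Complex_sign e (a b : R) :
  Complex ((-1) ^+ e * a) ((-1) ^+ e * b) = (-1) ^+ e * Complex a b.
Proof. by case: e; rewrite ?expr0 ?mul1r // expr1 !mulN1r. Qed.

Lemma Complex_sum (I : finType) (a b : I -> R) :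
  Complex (\sum_i a i) (\sum_i b i) = \sum_i Complex (a i) (b i).
Proof. by apply: (big_rec3 (fun u v c => Complex u v = c)) => // i u v c _ <-. Qed.

Lemma mul_conj_sqn x : x * Num.conj x = (sqn x)%:C.
Proof.
by case: x => a b; apply/eqP; rewrite eq_complex /sqn /=; apply/andP; split; apply/eqP; ring.
Qed.

Lemma sqnN x : sqn (- x) = sqn x.
Proof. by case: x => a b; rewrite /sqn /= !sqrrN. Qed.

Lemma sqn0 : sqn (0 : complex R) = 0.
Proof. by rewrite /sqn /= expr0n addr0. Qed.

Lemma adjmxE n (A : 'M[complex R]_n) i j : adjmx A i j = Num.conj (A j i).
Proof. by rewrite !mxE. Qed.

Lemma adjmx_sign_conj n (eps : 'I_n -> bool) (A : 'M[complex R]_n) :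
  adjmx (sign_diag (complex R) eps *m A *m sign_diag (complex R) eps) =
  sign_diag (complex R) eps *m adjmx A *m sign_diag (complex R) eps.
Proof.
apply/matrixP => i j; rewrite [RHS]sign_conjE /adjmx [LHS]mxE [LHS]mxE sign_conjE.
by rewrite rmorphM rmorph_sign addbC [in RHS]mxE [in RHS]mxE.
Qed.

Lemma posdef_diag_mx n (d : 'rV[complex R]_n) :
  (forall i, 0 < d 0 i) -> posdef (diag_mx d).
Proof.
move=> d_gt0 v v0; rewrite mul_mx_diag mxE.
have [j vj0] : exists j, v 0 j != 0.
  apply/existsP; apply: contraR v0; rewrite negb_exists => /forallP v0.
  by apply/eqP/rowP => j; rewrite mxE; apply/eqP/negbNE/v0.
have termE i : (\matrix_(k, l) (v k l * d 0 l)) 0 i * (map_mx Num.conj v)^T i 0 =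
    v 0 i * Num.conj (v 0 i) * d 0 i.
  by rewrite !mxE mulrAC.
rewrite (bigD1 j) //= termE; apply: ltr_wpDr.
  by apply: sumr_ge0 => i _; rewrite termE mulr_ge0 ?mul_conjC_ge0 ?ltW.
by rewrite mulr_gt0 ?mul_conjC_gt0.
Qed.

End ComplexFacts.

Section RealMatrixAction.
Variable R : realType.

Definition pt_mulmxr m N (A : 'M[R]_(m, N)) (z : pt R m) : pt R N :=
  (z.1 *m A, z.2 *m A).

Variables (m N : nat) (A : 'M[R]_(m, N)).

Lemma pt_mulmxr_linear : linear (pt_mulmxr A).
Proof. by move=> c x y; rewrite /pt_mulmxr /= !mulmxDl -!scalemxAl. Qed.

Lemma pt_mulmxr_ex k : pt_mulmxr A (ex R k) = (row k A, 0).
Proof. by rewrite /pt_mulmxr /= mul0mx rowE. Qed.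

Lemma pt_mulmxr_ey k : pt_mulmxr A (ey R k) = (0, row k A).
Proof. by rewrite /pt_mulmxr /= mul0mx rowE. Qed.

Lemma differentiable_mulmxr (x : 'rV[R]_m) : differentiable (mulmxr A) x.
Proof.
have -> : mulmxr A = \sum_i (fun y : 'rV[R]_m => y 0 i *: row i A).
  by apply/funext => y; rewrite fct_sumE /= mulmx_sum_row.
apply: differentiable_sum => i.
apply: (@differentiable_comp _ _ _ _ (fun y : 'rV[R]_m => y 0 i) ( *:%R^~ (row i A))).
  exact: differentiable_coord.
exact: ex_diff.
Qed.

Lemma differentiable_pt_mulmxr z : differentiable (pt_mulmxr A) z.
Proof.
apply: differentiable_pair.
  exact: (differentiable_comp (differentiable_fst _) (differentiable_mulmxr _)).
exact: (differentiable_comp (differentiable_snd _) (differentiable_mulmxr _)).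
Qed.

End RealMatrixAction.

Section Wirtinger.
Variables (R : realType) (N : nat).
Local Notation C := (complex R).
Local Notation iC := (Complex 0 1 : C).
Implicit Types (a k : 'I_N) (z : pt R N).

Lemma iC_sqr : iC * iC = -1.
Proof. by apply/eqP; rewrite eq_complex /= !mulr0 !mul1r mul0r !addr0 oppr0 sub0r !eqxx. Qed.

Lemma dz_cst (c : C) a z : dz (fun _ => c) a z = 0.
Proof. by rewrite /dz /dxC /dyC /dx /dy !derive_cst mulr0 subr0 mul0r. Qed.

Lemma dxC_coord k a z : dxC (fun w => Defs.coord w k) a z = (k == a)%:R.
Proof.
rewrite /dxC /dx !derive_linear /=; try by move=> c x y; rewrite !mxE.
by rewrite !mxE eqxx andTb eq_sym; case: (a == k).
Qed.

Lemma dyC_coord k a z : dyC (fun w => Defs.coord w k) a z = iC * (k == a)%:R.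
Proof.
rewrite /dyC /dy !derive_linear /=; try by move=> c x y; rewrite !mxE.
rewrite !mxE eqxx andTb eq_sym; case: (a == k); rewrite ?mulr1 ?mulr0 //.
Qed.

Lemma dz_coord k a z : dz (fun w => Defs.coord w k) a z = (k == a)%:R.
Proof.
rewrite /dz dxC_coord dyC_coord mulrA iC_sqr mulN1r opprK -mulr2n -[_ *+ 2]mulr_natr.
by rewrite mulfK // pnatr_eq0.
Qed.

Lemma dzb_coord k a z : dzb (fun w => Defs.coord w k) a z = 0.
Proof. by rewrite /dzb dxC_coord dyC_coord mulrA iC_sqr mulN1r subrr mul0r. Qed.

Lemma dxC_dyC_near (G1 G2 : pt R N -> C) a z :
  (\forall w \near z, G1 w = G2 w) ->
  dxC G1 a z = dxC G2 a z /\ dyC G1 a z = dyC G2 a z.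
Proof.
move=> G12; have ReG12 : \forall w \near z, complex.Re (G1 w) = complex.Re (G2 w).
  by apply: filterS G12 => w ->.
have ImG12 : \forall w \near z, complex.Im (G1 w) = complex.Im (G2 w).
  by apply: filterS G12 => w ->.
by rewrite /dxC /dyC /dx /dy !(near_eq_derive _ ReG12) !(near_eq_derive _ ImG12).
Qed.

Lemma dz_near (G1 G2 : pt R N -> C) a z :
  (\forall w \near z, G1 w = G2 w) -> dz G1 a z = dz G2 a z.
Proof. by move=> /(dxC_dyC_near a) [dxE dyE]; rewrite /dz dxE dyE. Qed.

Lemma dzb_near (G1 G2 : pt R N -> C) a z :
  (\forall w \near z, G1 w = G2 w) -> dzb G1 a z = dzb G2 a z.
Proof. by move=> /(dxC_dyC_near a) [dxE dyE]; rewrite /dzb dxE dyE. Qed.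

Lemma gmet_near (Phi1 Phi2 : pt R N -> R) a b z :
  (\forall w \near z, Phi1 w = Phi2 w) -> gmet Phi1 a b z = gmet Phi2 a b z.
Proof.
move=> /nbhs_interior Phi12; apply: dz_near; apply: filterS Phi12 => w Phi12.
by apply: dzb_near; apply: filterS Phi12 => v ->.
Qed.

End Wirtinger.

Section CoordinateSelection.
Variables (R : realType) (m N : nat) (A : 'M[R]_(m, N)) (sigma : 'I_m -> 'I_N).
Hypothesis rowA : forall k, row k A = 'e_(sigma k).
Local Notation C := (complex R).
Local Notation f := (pt_mulmxr A).

Lemma dx_comp_select (F : pt R N -> R) k z : dx (F \o f) k z = dx F (sigma k) (f z).
Proof. by rewrite /dx derive_comp_linear ?pt_mulmxr_ex ?rowA //; exact: pt_mulmxr_linear. Qed.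

Lemma dy_comp_select (F : pt R N -> R) k z : dy (F \o f) k z = dy F (sigma k) (f z).
Proof. by rewrite /dy derive_comp_linear ?pt_mulmxr_ey ?rowA //; exact: pt_mulmxr_linear. Qed.

Lemma dxC_comp_select (G : pt R N -> C) k z : dxC (G \o f) k z = dxC G (sigma k) (f z).
Proof.
by rewrite /dxC -(dx_comp_select (fun y => complex.Re (G y)))
  -(dx_comp_select (fun y => complex.Im (G y))).
Qed.

Lemma dyC_comp_select (G : pt R N -> C) k z : dyC (G \o f) k z = dyC G (sigma k) (f z).
Proof.
by rewrite /dyC -(dy_comp_select (fun y => complex.Re (G y)))
  -(dy_comp_select (fun y => complex.Im (G y))).
Qed.

Lemma dz_comp_select (G : pt R N -> C) k z : dz (G \o f) k z = dz G (sigma k) (f z).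
Proof. by rewrite /dz dxC_comp_select dyC_comp_select. Qed.

Lemma dzb_comp_select (G : pt R N -> C) k z : dzb (G \o f) k z = dzb G (sigma k) (f z).
Proof. by rewrite /dzb dxC_comp_select dyC_comp_select. Qed.

Lemma gmet_comp_select (Phi : pt R N -> R) a b z :
  gmet (Phi \o f) a b z = gmet Phi (sigma a) (sigma b) (f z).
Proof.
rewrite /gmet.
have -> : (fun w => dzb (fun v => Complex ((Phi \o f) v) 0) b w) =
    (fun y => dzb (fun v => Complex (Phi v) 0) (sigma b) y) \o f.
  by apply/funext => w; exact: (dzb_comp_select (fun v => Complex (Phi v) 0)).
exact: (dz_comp_select (fun y => dzb (fun v => Complex (Phi v) 0) (sigma b) y)).
Qed.

Lemma dz_comp_select_coord k a z : dz (fcomp f k) a z = (k == sigma a)%:R.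
Proof. by rewrite -[fcomp f k]/((fun w => Defs.coord w k) \o f) dz_comp_select dz_coord. Qed.

Lemma dzb_comp_select_coord k a z : dzb (fcomp f k) a z = 0.
Proof. by rewrite -[fcomp f k]/((fun w => Defs.coord w k) \o f) dzb_comp_select dzb_coord. Qed.

Lemma flip_comp_select (s : 'I_N -> bool) z :
  (forall a, s (sigma a) = false) -> pt_mulmxr (sign_diag R s) (f z) = f z.
Proof.
move=> s_sigma; suff AD : A *m sign_diag R s = A by rewrite /pt_mulmxr /= -!mulmxA AD.
apply/row_matrixP => a.
by rewrite row_mul rowA -rowE row_sign_diag s_sigma expr0 scale1r.
Qed.

End CoordinateSelection.

Section Parity.
Variables (R : realType) (N : nat) (s : 'I_N -> bool).
Local Notation C := (complex R).
Local Notation flip := (pt_mulmxr (sign_diag R s)).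

Definition parity (T : pzRingType) (e : bool) (F : pt R N -> T) :=
  forall z, F (flip z) = (-1) ^+ e * F z.

Lemma flip_ex k : flip (ex R k) = (-1) ^+ s k *: ex R k.
Proof. by rewrite pt_mulmxr_ex row_sign_diag /ex; congr pair; rewrite scaler0. Qed.

Lemma flip_ey k : flip (ey R k) = (-1) ^+ s k *: ey R k.
Proof. by rewrite pt_mulmxr_ey row_sign_diag /ey; congr pair; rewrite scaler0. Qed.

Lemma parity_derive (F : pt R N -> R) (e c : bool) v :
  flip v = (-1) ^+ c *: v -> parity e F -> parity (e (+) c) (fun z => 'D_v F z).
Proof.
move=> flip_v F_par z.
have : 'D_v (F \o flip) z = (-1) ^+ c * 'D_v F (flip z).
  by rewrite derive_comp_linear ?flip_v ?derive_signv //; exact: pt_mulmxr_linear.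
have -> : F \o flip = (fun x => (-1) ^+ e * F x) by apply/funext => x; exact: F_par.
rewrite derive_mull => /(congr1 ( *%R ((-1) ^+ c))); rewrite signrMK => <-.
by rewrite mulrA -signr_addb addbC.
Qed.

Lemma parity_dx (F : pt R N -> R) e k : parity e F -> parity (e (+) s k) (dx F k).
Proof. exact/parity_derive/flip_ex. Qed.

Lemma parity_dy (F : pt R N -> R) e k : parity e F -> parity (e (+) s k) (dy F k).
Proof. exact/parity_derive/flip_ey. Qed.

Lemma parity_Re (G : pt R N -> C) e : parity e G -> parity e (fun z => complex.Re (G z)).
Proof. by move=> G_par z; rewrite G_par Re_sign. Qed.

Lemma parity_Im (G : pt R N -> C) e : parity e G -> parity e (fun z => complex.Im (G z)).
Proof. by move=> G_par z; rewrite G_par Im_sign. Qed.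

Lemma parity_dxC (G : pt R N -> C) e k : parity e G -> parity (e (+) s k) (dxC G k).
Proof.
move=> G_par z.
by rewrite /dxC (parity_dx k (parity_Re G_par)) (parity_dx k (parity_Im G_par)) Complex_sign.
Qed.

Lemma parity_dyC (G : pt R N -> C) e k : parity e G -> parity (e (+) s k) (dyC G k).
Proof.
move=> G_par z.
by rewrite /dyC (parity_dy k (parity_Re G_par)) (parity_dy k (parity_Im G_par)) Complex_sign.
Qed.

Lemma parity_dz (G : pt R N -> C) e k : parity e G -> parity (e (+) s k) (dz G k).
Proof.
move=> G_par z.
by rewrite /dz (parity_dxC k G_par) (parity_dyC k G_par) mulrCA -mulrBr mulrA.
Qed.

Lemma parity_dzb (G : pt R N -> C) e k : parity e G -> parity (e (+) s k) (dzb G k).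
Proof.
move=> G_par z.
by rewrite /dzb (parity_dxC k G_par) (parity_dyC k G_par) mulrCA -mulrDr mulrA.
Qed.

Lemma parity_gmet (Phi : pt R N -> R) a b :
  parity false Phi -> parity (s a (+) s b) (gmet Phi a b).
Proof.
move=> Phi_par.
have Phi_parC : parity false (fun v => Complex (Phi v) 0).
  by move=> z; rewrite Phi_par !mul1r.
by have := parity_dz a (parity_dzb b Phi_parC); rewrite addFb addbC.
Qed.

Lemma parity_odd_eq0 (G : pt R N -> C) z : parity true G -> flip z = z -> G z = 0.
Proof. by move=> G_par z_fix; apply: self_opp_eq0; rewrite -mulN1r -{1}z_fix G_par. Qed.

(* Each term d_a g_{b lbar} * g^{lbar k} of Gamma^k_{ab} has an odd factor: the
   first one if the direction l is flipped, the inverse metric entry otherwise. *)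
Lemma christoffel_parity_eq0 (Phi : pt R N -> R) z k a b :
  parity false Phi -> flip z = z -> ~~ s a -> ~~ s b -> s k ->
  christoffel Phi k a b z = 0.
Proof.
move=> Phi_par z_fix sa sb sk; rewrite /christoffel big1 // => l _.
have [sl|sl] := boolP (s l).
  have := parity_dz a (parity_gmet b l Phi_par).
  by rewrite (negbTE sa) (negbTE sb) sl => /parity_odd_eq0 ->; rewrite ?mul0r.
have gmx_fix : gmx Phi z = sign_diag C s *m gmx Phi z *m sign_diag C s.
  by apply/matrixP => i j; rewrite sign_conjE !mxE -parity_gmet ?z_fix.
suff -> : invmx (gmx Phi z) l k = 0 by rewrite mulr0.
apply: self_opp_eq0; rewrite {1}gmx_fix invmx_sign_conj sign_conjE.
by rewrite (negbTE sl) sk mulN1r.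
Qed.

End Parity.

Section ExtendedSign.
Variables (R : realType) (N : nat) (s : 'I_N -> bool).

Definition extend_sign (i : 'I_(N + 1)) : bool :=
  if fintype.split i is inl r then s r else false.

Lemma extend_sign_l r : extend_sign (lshift 1 r) = s r.
Proof.
by rewrite /extend_sign; case: split_ordP => [r' /lshift_inj ->|k /eqP]; rewrite ?eq_shift.
Qed.

Lemma extend_sign_r k : extend_sign (rshift N k) = false.
Proof.
by rewrite /extend_sign; case: split_ordP => [r /eqP|k' _]; rewrite ?eq_shift.
Qed.

Lemma zpart_flip_extend (z : pt R (N + 1)) :
  zpart (pt_mulmxr (sign_diag R extend_sign) z) = pt_mulmxr (sign_diag R s) (zpart z).
Proof.
by congr pair; apply/rowP => r; rewrite [LHS]mxE !mulmx_sign_diagE extend_sign_l mxE.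
Qed.

Lemma wpart_flip_extend (z : pt R (N + 1)) :
  wpart (pt_mulmxr (sign_diag R extend_sign) z) = wpart z.
Proof. by rewrite /wpart /Defs.coord /= !mulmx_sign_diagE extend_sign_r !mul1r. Qed.

Lemma parity_Mpot (NO : pt R N -> R) mu :
  (forall y, NO (pt_mulmxr (sign_diag R s) y) = NO y) ->
  parity extend_sign false (Mpot NO mu).
Proof. by move=> NO_inv z; rewrite mul1r /Mpot zpart_flip_extend wpart_flip_extend NO_inv. Qed.

End ExtendedSign.

Section Omega2Symmetry.
Variables (R : realType) (n : nat).
Local Notation C := (complex R).
Local Notation K := (skew_dim n).

Definition skew_sign (eps : 'I_n -> bool) (r : 'I_K) : bool :=
  eps (val (enum_val r)).1 (+) eps (val (enum_val r)).2.

Variable eps : 'I_n -> bool.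
Local Notation flip := (pt_mulmxr (sign_diag R (skew_sign eps))).

Lemma ucoef_flip (y : pt R K) j k :
  ucoef (flip y) j k = (-1) ^+ (eps j (+) eps k) * ucoef y j k.
Proof.
rewrite /ucoef; case: insubP => [q _ qE|_]; last by rewrite mulr0.
by rewrite /Defs.coord /= !mulmx_sign_diagE /skew_sign enum_rankK qE Complex_sign.
Qed.

Lemma Zmat_flip (y : pt R K) :
  Zmat (flip y) = sign_diag C eps *m Zmat y *m sign_diag C eps.
Proof.
apply/matrixP => j k; rewrite sign_conjE !mxE !ucoef_flip [eps k (+) _]addbC.
by rewrite mulrBr.
Qed.

Lemma Omega2_norm_flip (y : pt R K) : Omega2_norm (flip y) = Omega2_norm y.
Proof.
rewrite /Omega2_norm Zmat_flip adjmx_sign_conj.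
set D := sign_diag C eps; set Z := Zmat y.
have -> : D *m Z *m D *m (D *m adjmx Z *m D) = D *m (Z *m adjmx Z) *m D.
  by rewrite !mulmxA -(mulmxA _ D D) sign_diagK mulmx1 -!mulmxA.
have -> : 1%:M - D *m (Z *m adjmx Z) *m D = D *m (1%:M - Z *m adjmx Z) *m D.
  by rewrite mulmxBr mulmxBl mulmx1 sign_diagK.
by rewrite det_sign_conj.
Qed.

End Omega2Symmetry.

Section Embedding.
Variables (R : realType) (n : nat).
Local Notation p := n./2.
Local Notation K := (skew_dim n).
Local Notation C := (complex R).

Lemma double_half_le : (p + p <= n)%N.
Proof. by rewrite addnn -{2}(odd_double_half n) leq_addl. Qed.

Lemma half_le : (p <= n)%N.
Proof. exact: leq_trans (leq_addr p p) double_half_le. Qed.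

Lemma antidiag_lt (j : 'I_p) :
  (widen_ord half_le j < rev_ord (widen_ord half_le j))%N.
Proof. have := double_half_le; have := ltn_ord j; rewrite /=; lia. Qed.

Definition antidiag_idx (j : 'I_p) : skew_idx n :=
  exist _ (widen_ord half_le j, rev_ord (widen_ord half_le j)) (antidiag_lt j).

Lemma antidiag_idxE (q : skew_idx n) (j : 'I_p) :
  (q == antidiag_idx j) =
  ((val q).1 == j :> nat) && ((val q).2 == (n.-1 - j)%N :> nat).
Proof.
rewrite -(inj_eq val_inj) /= -pair_eqE /=.
by congr andb; rewrite -val_eqE /=; apply/eqP/eqP; lia.
Qed.

Definition phi_idx (a : 'I_(p + 1)) : 'I_(K + 1) :=
  if fintype.split a is inl j then lshift 1 (enum_rank (antidiag_idx j))
  else rshift K ord0.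

Lemma phi_idx_l (j : 'I_p) : phi_idx (lshift 1 j) = lshift 1 (enum_rank (antidiag_idx j)).
Proof.
by rewrite /phi_idx; case: split_ordP => [j' /lshift_inj ->|k /eqP]; rewrite ?eq_shift.
Qed.

Lemma phi_idx_r (k : 'I_1) : phi_idx (rshift p k) = rshift K ord0.
Proof.
by rewrite /phi_idx; case: split_ordP => [j' /eqP|k' _]; rewrite ?eq_shift.
Qed.

Lemma phi_idx_inj : injective phi_idx.
Proof.
move=> a b; rewrite -(splitK a) -(splitK b).
case: (fintype.split a) => [ja|ka]; case: (fintype.split b) => [jb|kb] /=;
  rewrite ?phi_idx_l ?phi_idx_r.
- move=> /lshift_inj /enum_rank_inj /(congr1 val) [] jab _.
  by congr lshift; apply: val_inj.
- by move=> /eqP; rewrite eq_shift.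
- by move=> /eqP; rewrite eq_shift.
- by rewrite (ord1 ka) (ord1 kb).
Qed.

Definition phi_mx : 'M[R]_(p + 1, K + 1) := \matrix_a 'e_(phi_idx a).

Lemma row_phi_mx a : row a phi_mx = 'e_(phi_idx a).
Proof. exact: rowK. Qed.

Lemma phi_mxE a i : phi_mx a i = (i == phi_idx a)%:R.
Proof. by rewrite !mxE eqxx. Qed.

Lemma phi_row_mulmx (x : 'rV[R]_(p + 1)) :
  row_mx (phiv (lsubmx x)) (rsubmx x) = x *m phi_mx.
Proof.
apply/rowP => i; rewrite [RHS]mxE big_split_ord /= big_ord1 phi_mxE phi_idx_r.
rewrite -(splitK i); case: (fintype.split i) => [r|k] /=.
- rewrite row_mxEl eq_lrshift mulr0 addr0 mxE; apply: eq_bigr => j _.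
  rewrite phi_mxE !mxE phi_idx_l (inj_eq (@lshift_inj _ _)).
  rewrite -(inj_eq enum_val_inj) enum_rankK -antidiag_idxE.
  by case: eqP; rewrite ?mulr1 ?mulr0.
- rewrite row_mxEr (ord1 k) eqxx mulr1 big1 ?add0r ?mxE // => j _.
  by rewrite phi_mxE phi_idx_l eq_rlshift mulr0.
Qed.

Lemma mulmx_phi_mx_idx (x : 'rV[R]_(p + 1)) a : (x *m phi_mx) 0 (phi_idx a) = x 0 a.
Proof.
rewrite mxE (bigD1 a) //= phi_mxE eqxx mulr1 big1 ?addr0 // => b ba.
by rewrite phi_mxE (inj_eq phi_idx_inj) eq_sym (negbTE ba) mulr0.
Qed.

Lemma phi_extE : @phi_ext R n = pt_mulmxr phi_mx.
Proof. by apply/funext => z; rewrite /phi_ext !phi_row_mulmx. Qed.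

Lemma wpart_phi (z : pt R (p + 1)) : wpart (phi_ext z) = wpart z.
Proof. by rewrite phi_extE /wpart /Defs.coord /= -(phi_idx_r ord0) !mulmx_phi_mx_idx. Qed.

End Embedding.

Section EmbeddedNorm.
Variables (R : realType) (n : nat).
Local Notation p := n./2.
Local Notation C := (complex R).
Implicit Types z : pt R (p + 1).

Definition ucoord z (m : nat) : C := \sum_(j < p) (m == j)%:R * Defs.coord (zpart z) j.

Lemma ucoord_ge z m : (p <= m)%N -> ucoord z m = 0.
Proof.
move=> pm; rewrite /ucoord big1 // => j _.
have -> : (m == j) = false by apply/negbTE/eqP => mj; move: (ltn_ord j); lia.
by rewrite mul0r.
Qed.

Lemma ucoord_lt z (j : 'I_p) : ucoord z j = Defs.coord (zpart z) j.
Proof.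
rewrite /ucoord (bigD1 j) //= eqxx mul1r big1 ?addr0 // => i ij.
have -> : (nat_of_ord j == nat_of_ord i) = false by rewrite eq_sym; exact: negbTE ij.
by rewrite mul0r.
Qed.

Lemma zpart_phi z : zpart (phi_ext z) = (phiv (lsubmx z.1), phiv (lsubmx z.2)).
Proof. by rewrite /zpart /phi_ext /= !row_mxKl. Qed.

Lemma ucoef_phi z (j k : 'I_n) :
  ucoef (zpart (phi_ext z)) j k = (k == (n.-1 - j)%N :> nat)%:R * ucoord z j.
Proof.
rewrite /ucoef; case: insubP => [q qlt qE | jk_ge].
  rewrite zpart_phi /Defs.coord !mxE /= enum_rankK qE /= Complex_sum.
  rewrite /ucoord mulr_sumr; apply: eq_bigr => j' _; rewrite !mxE /=.
  have [->|jj'] := eqVneq (nat_of_ord j) (nat_of_ord j'); last by rewrite mul0r mulr0.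
  by case: eqP; rewrite ?mul1r ?mul0r // /Defs.coord /zpart /= !mxE.
have [jp|pj] := ltnP j p; last by rewrite ucoord_ge // mulr0.
suff -> : (k == (n.-1 - j)%N :> nat) = false by rewrite mul0r.
by apply/negbTE/eqP => kE; move: jk_ge; rewrite /= kE; have := double_half_le n; lia.
Qed.

Definition antidiag_coef z (m : nat) : C := ucoord z m - ucoord z (n.-1 - m)%N.

Lemma Zmat_phi z (j k : 'I_n) :
  Zmat (zpart (phi_ext z)) j k = (k == (n.-1 - j)%N :> nat)%:R * antidiag_coef z j.
Proof.
rewrite mxE !ucoef_phi /antidiag_coef.
have -> : (j == (n.-1 - k)%N :> nat) = (k == (n.-1 - j)%N :> nat).
  by apply/eqP/eqP; have := ltn_ord j; have := ltn_ord k; lia.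
by case: eqP => [->|_]; rewrite ?mul1r // !mul0r subr0.
Qed.

Lemma I_minus_ZZ_phi z :
  1%:M - Zmat (zpart (phi_ext z)) *m adjmx (Zmat (zpart (phi_ext z))) =
  diag_mx (\row_j (1 - sqn (antidiag_coef z j))%:C).
Proof.
apply/matrixP => j k; rewrite [LHS]mxE [X in _ + X]mxE [X in _ - X]mxE.
rewrite (bigD1 (rev_ord j)) //= big1 ?addr0 => [|l lj]; last first.
  rewrite adjmxE !Zmat_phi.
  suff -> : (nat_of_ord l == (n.-1 - j)%N) = false by rewrite !mul0r.
  apply/negbTE; apply: contra lj => /eqP lE; apply/eqP/val_inj => /=.
  by rewrite lE; have := ltn_ord j; lia.
rewrite adjmxE !Zmat_phi.
have -> : nat_of_ord (rev_ord j) = (n.-1 - j)%N by rewrite /=; have := ltn_ord j; lia.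
rewrite eqxx mul1r.
have -> : ((n.-1 - j)%N == (n.-1 - k)%N) = (j == k).
  by rewrite -val_eqE /=; apply/eqP/eqP; have := ltn_ord j; have := ltn_ord k; lia.
rewrite !mxE; have [<-|jk] := eqVneq j k; last by rewrite !mulr0n !mul0r rmorph0 mulr0 subr0.
by rewrite !mulr1n mul1r mul_conj_sqn rmorphB rmorph1.
Qed.

Lemma antidiag_coef_lt z (j : 'I_p) : antidiag_coef z j = Defs.coord (zpart z) j.
Proof.
rewrite /antidiag_coef ucoord_lt ucoord_ge ?subr0 //.
by have := ltn_ord j; have := double_half_le n; lia.
Qed.

Lemma antidiag_coef_rev z (j : 'I_p) :
  antidiag_coef z (n.-1 - j)%N = - Defs.coord (zpart z) j.
Proof.
have := ltn_ord j; have := double_half_le n => hn hj.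
rewrite /antidiag_coef ucoord_ge; last by lia.
have -> : (n.-1 - (n.-1 - j))%N = j by lia.
by rewrite ucoord_lt sub0r.
Qed.

Lemma antidiag_coef_mid z m : (p <= m)%N -> (p <= n.-1 - m)%N -> antidiag_coef z m = 0.
Proof. by move=> pm pm'; rewrite /antidiag_coef !ucoord_ge // subr0. Qed.

Lemma sqn_antidiag_coef_lt1 z (i : 'I_n) :
  polydisk (zpart z) -> sqn (antidiag_coef z i) < 1.
Proof.
move=> z_disk; have [ip|pi] := ltnP i p.
  by rewrite (antidiag_coef_lt z (Ordinal ip)).
have [ip'|pi'] := ltnP (n.-1 - i) p; last by rewrite antidiag_coef_mid // sqn0 ltr01.
have -> : nat_of_ord i = (n.-1 - Ordinal ip')%N by rewrite /=; have := ltn_ord i; lia.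
by rewrite antidiag_coef_rev sqnN.
Qed.

Lemma prod_antidiag_coef z :
  \prod_(i < n) (1 - sqn (antidiag_coef z i)) = polydisk_norm (zpart z) ^+ 2.
Proof.
have hn := double_half_le n.
rewrite (bigID (fun i : 'I_n => (i < p)%N)) /= (big_ord_narrow (half_le n)) /=.
under eq_bigr => j _ do rewrite antidiag_coef_lt.
rewrite [X in _ * X](reindex_inj rev_ord_inj) /=.
rewrite [X in _ * X](bigID (fun i : 'I_n => (i < p)%N)) /=.
rewrite [X in _ * (_ * X)]big1 ?mulr1 => [|i /andP[]]; last first.
  rewrite -!leqNgt => pi pi'.
  by rewrite antidiag_coef_mid ?sqn0 ?subr0 //; have := ltn_ord i; lia.
have -> : \prod_(i < n | ~~ (n - i.+1 < p)%N && (i < p)%N)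
      (1 - sqn (antidiag_coef z (n - i.+1)%N))
    = \prod_(i < n | (i < p)%N) (1 - sqn (antidiag_coef z (n.-1 - i)%N)).
  apply: eq_big => i /=.
    by case: (ltnP i p) => ip; rewrite ?andbF ?andbT //; apply/negP; lia.
  by move=> _; congr (1 - sqn (antidiag_coef z _)); have := ltn_ord i; lia.
rewrite (big_ord_narrow (half_le n)) /= expr2; congr (_ * _).
by apply: eq_bigr => j _; rewrite antidiag_coef_rev sqnN.
Qed.

Lemma Omega2_phi z : polydisk (zpart z) -> Omega2 (zpart (phi_ext z)).
Proof.
move=> z_disk; rewrite /Omega2 /= I_minus_ZZ_phi; apply: posdef_diag_mx => i.
by rewrite mxE ltcE /= eqxx subr_gt0 sqn_antidiag_coef_lt1.
Qed.

Lemma Omega2_norm_phi z : Omega2_norm (zpart (phi_ext z)) = `|polydisk_norm (zpart z)|.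
Proof.
rewrite /Omega2_norm I_minus_ZZ_phi det_diag.
under eq_bigr => i _ do rewrite mxE.
by rewrite -rmorph_prod /= prod_antidiag_coef sqrtr_sqr.
Qed.

End EmbeddedNorm.

Section OffImageReflection.
Variables (R : realType) (n : nat).
Local Notation p := n./2.
Local Notation K := (skew_dim n).

Definition antidiag_pair (j0 i : 'I_n) : bool := (i == j0) || (i == rev_ord j0).

Definition antidiag_flip_sign (j0 : 'I_n) : 'I_(K + 1) -> bool :=
  extend_sign (skew_sign (antidiag_pair j0)).

Lemma antidiag_pair_rev j0 i : antidiag_pair j0 (rev_ord i) = antidiag_pair j0 i.
Proof.
rewrite /antidiag_pair (inj_eq rev_ord_inj) orbC; congr orb.
by rewrite -{1}(rev_ordK j0) (inj_eq rev_ord_inj).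
Qed.

Lemma antidiag_flip_sign_phi j0 a : antidiag_flip_sign j0 (phi_idx a) = false.
Proof.
rewrite /antidiag_flip_sign -(splitK a); case: (fintype.split a) => [j|k] /=.
  by rewrite phi_idx_l extend_sign_l /skew_sign enum_rankK /= antidiag_pair_rev addbb.
by rewrite phi_idx_r extend_sign_r.
Qed.

Lemma antidiag_flip_sign_off_image k :
  (forall a, k != phi_idx a) -> exists j0, antidiag_flip_sign j0 k.
Proof.
rewrite /antidiag_flip_sign -(splitK k); case: (fintype.split k) => [r|k1] /= k_off;
  last by have := k_off (rshift p ord0); rewrite phi_idx_r (ord1 k1) eqxx.
set q := enum_val r; have q_lt := valP q.
exists (val q).1; rewrite extend_sign_l /skew_sign -/q /antidiag_pair eqxx /=.
apply/negP => /orP[/eqP q2E|/eqP q2E]; first by move: q_lt; rewrite q2E ltnn.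
have q1_lt : ((val q).1 < p)%N.
  have := double_half_le n; have := q_lt; rewrite q2E /=.
  have := leq_half_double n n; rewrite -addnn; lia.
have qE : q = antidiag_idx (Ordinal q1_lt).
  by apply/eqP; rewrite antidiag_idxE /= eqxx q2E /=; apply/eqP; lia.
by have := k_off (lshift 1 (Ordinal q1_lt)); rewrite phi_idx_l -qE /q enum_valK eqxx.
Qed.

End OffImageReflection.

Section SymmetricEmbedding.
Variables (R : realType) (n : nat) (mu : R).
Local Notation p := n./2.
Local Notation Phi1 := (Mpot (@polydisk_norm R p) mu).
Local Notation Phi2 := (Mpot (@Omega2_norm R n) mu).
Local Notation f := (@phi_ext R n).
Implicit Types z : pt R (p + 1).

Lemma dz_phi k a z : dz (fcomp f k) a z = (k == phi_idx a)%:R.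
Proof. by rewrite phi_extE (dz_comp_select_coord (@row_phi_mx R n)). Qed.

Lemma dzb_phi k a z : dzb (fcomp f k) a z = 0.
Proof. by rewrite phi_extE (dzb_comp_select_coord (@row_phi_mx R n)). Qed.

Lemma dz_dz_phi k a b z : dz (fun w => dz (fcomp f k) b w) a z = 0.
Proof.
have -> : (fun w => dz (fcomp f k) b w) = fun=> (k == phi_idx b)%:R.
  by apply/funext => w; exact: dz_phi.
exact: dz_cst.
Qed.

Lemma gmet_phi (Phi : pt R (skew_dim n + 1) -> R) a b z :
  gmet (Phi \o f) a b z = gmet Phi (phi_idx a) (phi_idx b) (f z).
Proof. by rewrite phi_extE (gmet_comp_select (@row_phi_mx R n)). Qed.

Lemma Mdom_phi z :
  Mdom (@polydisk R p) (@polydisk_norm R p) mu z ->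
  Mdom (@Omega2 R n) (@Omega2_norm R n) mu (f z).
Proof.
move=> [z_disk w_lt]; split; first exact: Omega2_phi.
rewrite wpart_phi Omega2_norm_phi ger0_norm // /polydisk_norm.
by apply: prodr_ge0 => j _; rewrite subr_ge0 ltW.
Qed.

Lemma polydisk_norm_near_gt0 z :
  polydisk (zpart z) -> \forall w \near z, 0 < polydisk_norm (zpart w).
Proof.
move=> z_disk.
have coord_near j : \forall w \near z, sqn (Defs.coord (zpart w) j) < 1.
  pose i := lshift 1 j.
  have cont1 : (fun w : pt R (p + 1) => w.1 0 i) @ z --> z.1 0 i.
    apply: (@cvg_comp _ _ _ fst (fun M : 'rV[R]_(p + 1) => M 0 i)); first exact: cvg_fst.
    exact: coord_continuous.
  have cont2 : (fun w : pt R (p + 1) => w.2 0 i) @ z --> z.2 0 i.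
    apply: (@cvg_comp _ _ _ snd (fun M : 'rV[R]_(p + 1) => M 0 i)); first exact: cvg_snd.
    exact: coord_continuous.
  have sqn_cont : (fun w : pt R (p + 1) => sqn (Defs.coord (zpart w) j)) @ z -->
      sqn (Defs.coord (zpart z) j).
    rewrite /sqn /= !mxE !expr2; under eq_fun do rewrite /= !mxE !expr2.
    by apply: cvgD; apply: cvgM.
  by have := @cvgr_lt R _ _ _ _ _ sqn_cont 1 (z_disk j); apply.
apply: filterS (filter_forall _ coord_near) => w w_disk.
by apply: prodr_gt0 => j _; rewrite subr_gt0.
Qed.

Lemma Mpot_phi_near z :
  polydisk (zpart z) -> \forall w \near z, Phi2 (f w) = Phi1 w.
Proof.
move=> /polydisk_norm_near_gt0; apply: filterS => w w_gt0.
by rewrite /Mpot wpart_phi Omega2_norm_phi gtr0_norm.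
Qed.

Lemma parity_Mpot_Omega2 j0 : parity (antidiag_flip_sign j0) false Phi2.
Proof. exact/parity_Mpot/Omega2_norm_flip. Qed.

Lemma phi_flip_fixed j0 z :
  pt_mulmxr (sign_diag R (antidiag_flip_sign j0)) (f z) = f z.
Proof.
by rewrite phi_extE (flip_comp_select (@row_phi_mx R n)) // => a; exact: antidiag_flip_sign_phi.
Qed.

Lemma christoffel_off_image z k a b :
  (forall g, k != phi_idx g) ->
  christoffel Phi2 k (phi_idx a) (phi_idx b) (f z) = 0.
Proof.
move=> /antidiag_flip_sign_off_image [j0 k_odd].
apply: (christoffel_parity_eq0 (parity_Mpot_Omega2 j0) (phi_flip_fixed j0 z)) => //;
  by rewrite antidiag_flip_sign_phi.
Qed.

Lemma holomorphic_phi (D : set (pt R (p + 1))) : holomorphic_on D f.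
Proof.
move=> z _; split; last by move=> k b; exact: dzb_phi.
by rewrite phi_extE; exact: differentiable_pt_mulmxr.
Qed.

Lemma gmet_pullback_phi z a b : polydisk (zpart z) ->
  gmet Phi1 a b z =
  \sum_i \sum_j gmet Phi2 i j (f z) * dz (fcomp f i) a z * (dz (fcomp f j) b z)^*.
Proof.
move=> z_disk; under eq_bigr do under eq_bigr do rewrite !dz_phi conjC_nat.
under eq_bigr do rewrite sumr_mul_delta.
rewrite sumr_mul_delta -gmet_phi; apply: gmet_near.
by apply: filterS (Mpot_phi_near z_disk) => w <-.
Qed.

Lemma totally_geodesic_phi (D : set (pt R (p + 1))) : totally_geodesic D Phi2 f.
Proof.
move=> z _ a b; exists (fun g => christoffel Phi2 (phi_idx g) (phi_idx a) (phi_idx b) (f z)).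
move=> k; under eq_bigr do under eq_bigr do rewrite !dz_phi.
under eq_bigr do rewrite sumr_mul_delta.
rewrite sumr_mul_delta dz_dz_phi add0r; under eq_bigr do rewrite dz_phi.
have [[g ->]|k_off] := pselect (exists g, k = phi_idx g).
  by under eq_bigr do rewrite (inj_eq (@phi_idx_inj n)) eq_sym; rewrite sumr_mul_delta.
have k_off' g : k != phi_idx g by apply/eqP => kE; apply: k_off; exists g.
rewrite christoffel_off_image // big1 // => g _.
by rewrite (negbTE (k_off' g)) mulr0.
Qed.

End SymmetricEmbedding.

Theorem lemma3p3 (R : realType) (n : nat) (mu : R) :
  (2 <= n)%N -> 0 < mu ->
  kahler_immersion
    (Mdom (@polydisk R (n./2)) (@polydisk_norm R (n./2)) mu)
    (Mpot (@polydisk_norm R (n./2)) mu)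
    (Mdom (@Omega2 R n) (@Omega2_norm R n) mu)
    (Mpot (@Omega2_norm R n) mu)
    (@phi_ext R n)
  /\ totally_geodesic
    (Mdom (@polydisk R (n./2)) (@polydisk_norm R (n./2)) mu)
    (Mpot (@Omega2_norm R n) mu)
    (@phi_ext R n).
Proof.
move=> _ _; split; first split.
- exact: Mdom_phi.
- exact: holomorphic_phi.
- by move=> z [z_disk _] a b; exact: gmet_pullback_phi.
- exact: totally_geodesic_phi.
Qed.
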